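(* Let $F$ be a finite field with $q$ elements and $G$ a finite abelian group of order $m$. Let $r\in(0,1)$ and $\delta\in(0,1-q^{-1})$, and for each $n$ put $k=[rn]$ (the integer nearest to $rn$). Let $A$ be uniformly random in $(FG)^{k\times n}$, let $C_A=\{\mathbf{b}A\mid \mathbf{b}\in(FG)^k\}$ and let $\Delta(C_A)$ be its relative distance. If $r<g_q(\delta)$, then $\lim_{n\to\infty}\Pr\big(\Delta(C_A)>\delta\big)=1$, and the convergence is exponential.
   Context: Each element $\sum_{z\in G}a_z z$ of the group algebra $FG$ is identified with the word $(a_z)_{z\in G}\in F^m$, and elements of $(FG)^n$ with concatenated words of length $mn$; Hamming weight is $\mathrm{w}$. For $\mathbf{b}=(b_1,\dots,b_k)$, $\mathbf{b}A=(\sum_i b_ia_{i1},\dots,\sum_i b_ia_{in})$. $\Delta(C_A)=\mathrm{w}(C_A)/(mn)$ with $\mathrm{w}(C_A)$ the minimum weight of nonzero codewords of $C_A$. $h_q(x)=x\log_q(q-1)-x\log_q x-(1-x)\log_q(1-x)$ (with $0\log_q0=0$) and $g_q(x)=1-h_q(x)$. *)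

From HB Require Import structures.
From mathcomp Require Import all_boot all_order all_algebra all_fingroup all_field.
From mathcomp Require Import all_classical all_reals all_analysis.
Set Implicit Arguments. Unset Strict Implicit. Unset Printing Implicit Defensive.
Import Order.TTheory GRing.Theory Num.Theory.
Local Open Scope ring_scope.

Section GroupAlgebraCodes.
Variables (F : finFieldType) (gT : finGroupType).

(* Elements of the group algebra FG, identified with words (a_z)_{z in G}. *)
Definition galg := {ffun gT -> F}.

(* Product in FG: (sum_u x_u u)(sum_v y_v v) = sum_z (sum_u x_u y_{u^-1 z}) z *)
Definition galg_mul (x y : galg) : galg :=
  [ffun z => \sum_(u : gT) x u * y (u^-1 * z)%g].

Definition codeword (k n : nat) (b : {ffun 'I_k -> galg})
  (A : {ffun 'I_k -> {ffun 'I_n -> galg}}) : {ffun 'I_n -> galg} :=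
  [ffun j => \sum_(i < k) galg_mul (b i) (A i j)].

(* Hamming weight of the concatenated word of length m n *)
Definition hweight (n : nat) (c : {ffun 'I_n -> galg}) : nat :=
  #|[set p : 'I_n * gT | c p.1 p.2 != 0]|.

Definition reldist_gt (R : realType) (k n : nat)
  (A : {ffun 'I_k -> {ffun 'I_n -> galg}}) (delta : R) : bool :=
  [forall b : {ffun 'I_k -> galg},
     (codeword b A != 0) ==>
     (delta < (hweight (codeword b A))%:R / (#|gT| * n)%:R)].

(* k = [r n], the integer nearest to r n (ties rounded up) *)
Definition kdim (R : realType) (r : R) (n : nat) : nat :=
  Num.truncn (r * n%:R + 2^-1).

Definition prob_good (R : realType) (r delta : R) (n : nat) : R :=
  (#|[set A : {ffun 'I_(kdim r n) -> {ffun 'I_n -> galg}} | reldist_gt A delta]|)%:R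
  / (#|{ffun 'I_(kdim r n) -> {ffun 'I_n -> galg}}|)%:R.

End GroupAlgebraCodes.

Definition logq (R : realType) (q : nat) (x : R) : R := ln x / ln q%:R.

(* q-ary entropy h_q and g_q = 1 - h_q (with 0 log 0 = 0) *)
Definition xlogq (R : realType) (q : nat) (x : R) : R :=
  if x == 0 then 0 else x * logq q x.
Definition hq (R : realType) (q : nat) (x : R) : R :=
  x * logq q (q.-1)%:R - xlogq q x - xlogq q (1 - x).
Definition gq (R : realType) (q : nat) (x : R) : R := 1 - hq q x.

From HB Require Import structures.
From mathcomp Require Import all_boot all_order all_algebra all_fingroup all_field.
From mathcomp Require Import all_classical all_reals all_analysis.
From mathcomp Require Import ring lra.
Import Order.TTheory GRing.Theory Num.Theory.
Set Implicit Arguments. Unset Strict Implicit. Unset Printing Implicit Defensive.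
Local Open Scope ring_scope.

(* For [b != 0] the columns of the codeword [b A] are independent and each is uniform on
   the ideal [I_b] of [FG] generated by the entries of [b]. Let [T] be an information set of
   [I_b], so [|T| = dim I_b]. Since [G] is abelian, translating a column by [h] stays uniform,
   and the coordinates of a column on [hT] are uniform on [F ^ T]; AM-GM over the [m]
   translates then gives [E exp (-beta |T| wt) <= ((1 + (q - 1) e^(-beta m)) / q) ^ |T|].
   The Chernoff bound makes [Pr (wt (b A) <= delta m n)] at most [rho ^ (|T| n)], and for
   the optimal [beta] the rate [rho] is [q ^ (- g_q delta)]. Grouping the nonzero [b] by
   [d = dim I_b], there are at most [2 ^ (q ^ m) q ^ (d k)] of them, so the failure
   probability is at most [2 ^ (q ^ m) sum_(1 <= d <= m) q ^ (d (k - g_q(delta) n))],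
   exponentially small when [k ~ r n] with [r < g_q delta]. *)

Lemma leq_card_bigcup (I T : finType) (P : pred I) (B : I -> {set T}) :
  (#|\bigcup_(i | P i) B i| <= \sum_(i | P i) #|B i|)%N.
Proof.
elim/big_rec2: _ => [|i n U _ le_U]; first by rewrite cards0.
by rewrite (leq_trans (leq_card_setU _ _)) ?leq_add2l.
Qed.

Section GroupAlgebraDot.
Variables (F : finFieldType) (gT : finGroupType).
Local Notation galg := (galg F gT).
Local Notation vec k := {ffun 'I_k -> galg}.

Definition galg_dot k (b a : vec k) : galg := \sum_(i < k) galg_mul (b i) (a i).

Lemma galg_dotE k (b a : vec k) z :
  galg_dot b a z = \sum_(i < k) \sum_(u : gT) b i u * a i (u^-1 * z)%g.
Proof. by rewrite /galg_dot sum_ffunE; apply: eq_bigr => i _; rewrite ffunE. Qed.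

Lemma galg_dotD k (b a1 a2 : vec k) :
  galg_dot b (a1 + a2) = galg_dot b a1 + galg_dot b a2.
Proof.
apply/ffunP => z; rewrite ffunE !galg_dotE -big_split; apply: eq_bigr => i _.
by rewrite -big_split; apply: eq_bigr => u _; rewrite !ffunE mulrDr.
Qed.

Lemma galg_dotN k (b a : vec k) : galg_dot b (- a) = - galg_dot b a.
Proof.
apply/ffunP => z; rewrite ffunE !galg_dotE -sumrN; apply: eq_bigr => i _.
by rewrite -sumrN; apply: eq_bigr => u _; rewrite !ffunE mulrN.
Qed.

Definition scalev k (l : F) (a : vec k) : vec k := [ffun i => [ffun z => l * a i z]].

Lemma galg_dotZ k (b a : vec k) l z : galg_dot b (scalev l a) z = l * galg_dot b a z.
Proof.
rewrite !galg_dotE mulr_sumr; apply: eq_bigr => i _.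
by rewrite mulr_sumr; apply: eq_bigr => u _; rewrite !ffunE mulrCA.
Qed.

Definition unitv k (i : 'I_k) (l : F) : vec k :=
  [ffun j => if j == i then [ffun z => if z == 1%g then l else 0] else 0].

Lemma galg_dot_unitv k (b : vec k) i l z : galg_dot b (unitv i l) z = b i z * l.
Proof.
rewrite galg_dotE (bigD1 i) //= [X in _ + X]big1 ?addr0; last first.
  by move=> j /negbTE ji; apply: big1 => u _; rewrite !ffunE ji ffunE mulr0.
rewrite (bigD1 z) //= [X in _ + X]big1 ?addr0; last first.
  by move=> u uz; rewrite !ffunE eqxx ffunE -eq_mulVg1 (negbTE uz) mulr0.
by rewrite !ffunE eqxx ffunE mulVg eqxx.
Qed.

Definition translate k (h : gT) (a : vec k) : vec k :=
  [ffun i => [ffun z => a i (h * z)%g]].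

Lemma translate_inj k h : injective (@translate k h).
Proof.
move=> a a' /ffunP eqa; apply/ffunP => i; apply/ffunP => g.
by move/ffunP: (eqa i) => /(_ (h^-1 * g)%g); rewrite !ffunE mulKVg.
Qed.

Lemma galg_dot_translate k (b a : vec k) h z :
  abelian [set: gT] -> galg_dot b (translate h a) z = galg_dot b a (h * z)%g.
Proof.
move=> abG; have commG (x y : gT) : commute x y by apply: (centsP abG); rewrite inE.
rewrite !galg_dotE; apply: eq_bigr => i _; apply: eq_bigr => u _.
by rewrite !ffunE !mulgA (commG h u^-1%g).
Qed.

Definition galg_wt (c : galg) : nat := (\sum_(g : gT) (c g != 0%R))%N.

Definition galg_wt_on (T : {set gT}) (c : galg) (h : gT) : nat :=
  (\sum_(t in T) (c (h * t)%g != 0%R))%N.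

Lemma sum_galg_wt_on T c : (\sum_(h : gT) galg_wt_on T c h = #|T| * galg_wt c)%N.
Proof.
rewrite /galg_wt_on exchange_big /= -sum_nat_const; apply: eq_bigr => t _.
by rewrite /galg_wt [RHS](reindex_inj (mulIg t)).
Qed.

Lemma hweight_sum n (c : {ffun 'I_n -> galg}) : hweight c = (\sum_j galg_wt (c j))%N.
Proof.
rewrite /hweight /galg_wt pair_big /= -sum1_card big_mkcond /=.
by apply: eq_bigr => p _; rewrite inE; case: (_ != _).
Qed.

Definition restr (T : {set gT}) (c : galg) : galg :=
  [ffun g => if g \in T then c g else 0].

Definition supported (T : {set gT}) : {set galg} :=
  [set x : galg | [forall g, (g \notin T) ==> (x g == 0)]].

Lemma restr_supported T c : restr T c \in supported T.
Proof. by rewrite inE; apply/forallP => g; rewrite ffunE; case: (g \in T) => //=. Qed.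

Lemma restr_id T x : x \in supported T -> restr T x = x.
Proof.
rewrite inE => /forallP xT; apply/ffunP => g; rewrite ffunE.
by case: ifP => // gT'; move: (xT g); rewrite gT' => /eqP.
Qed.

Lemma card_supported T : #|supported T| = (#|F| ^ #|T|)%N.
Proof.
rewrite -cardsT -(card_pffun_on 0); apply: eq_card => x; rewrite inE.
apply/forallP/pffun_onP => [x0 | [/supportP x0 _] g]; last first.
  by apply/implyP => /x0 /eqP.
split=> [|y _]; last by rewrite inE.
by apply/supportP => g gT'; apply/eqP; move: (x0 g); rewrite gT'.
Qed.

Lemma galg_wt_on1 T c : galg_wt_on T c 1%g = galg_wt (restr T c).
Proof.
rewrite /galg_wt_on /galg_wt big_mkcond /=; apply: eq_bigr => g _.
by rewrite ffunE mul1g; case: (g \in T); rewrite ?eqxx.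
Qed.

(* The ideal [galg_dot b @: setT] projects onto all of [F ^ T]; the largest such [T] are
   the information sets of the ideal. *)
Definition info_set k (b : vec k) (T : {set gT}) : bool :=
  [forall x : galg, [exists a : vec k, restr T (galg_dot b a) == restr T x]].

Lemma info_set0 k (b : vec k) : info_set b finset.set0.
Proof.
by apply/forallP => x; apply/existsP; exists 0; apply/eqP/ffunP => g; rewrite !ffunE inE.
Qed.

Lemma info_set1 k (b : vec k) i g : b i g != 0 -> info_set b [set g].
Proof.
move=> big; apply/forallP => x; apply/existsP; exists (unitv i (x g / b i g)).
apply/eqP/ffunP => z; rewrite !ffunE inE.
by case: eqP => // ->; rewrite galg_dot_unitv mulrC divfK.
Qed.

Lemma info_setU1 k (b a1 a2 : vec k) T g : info_set b T ->
  restr T (galg_dot b a1) = restr T (galg_dot b a2) ->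
  galg_dot b a1 g != galg_dot b a2 g -> info_set b (g |: T).
Proof.
move=> /forallP infoT /ffunP eqT neq_g; apply/forallP => x.
have /existsP [a /eqP/ffunP eqa] := infoT x.
set c := a1 - a2; have dotc z : galg_dot b c z = galg_dot b a1 z - galg_dot b a2 z.
  by rewrite galg_dotD galg_dotN !ffunE.
have cg : galg_dot b c g != 0 by rewrite dotc subr_eq0.
apply/existsP; exists (a + scalev ((x g - galg_dot b a g) / galg_dot b c g) c).
apply/eqP/ffunP => z; rewrite !ffunE in_setU1 galg_dotD ffunE galg_dotZ.
case: eqP => [-> | _] /=; first by rewrite divfK // addrC subrK.
case zT: (z \in T) => //; move: (eqa z) (eqT z); rewrite !ffunE zT => <- eq12.
by rewrite (dotc z) eq12 subrr mulr0 addr0.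
Qed.

Lemma card_fiber k (b : vec k) T x : info_set b T -> x \in supported T ->
  #|[set a | restr T (galg_dot b a) == x]| = #|[set a | restr T (galg_dot b a) == 0]|.
Proof.
move=> /forallP /(_ x) /existsP [ax /eqP eqx] xT; rewrite (restr_id xT) in eqx.
have restr_dotD a c :
    restr T (galg_dot b (a + c)) = restr T (galg_dot b a) + restr T (galg_dot b c).
  by apply/ffunP => g; rewrite galg_dotD !ffunE; case: (g \in T); rewrite ?addr0.
have restr_dotN a : restr T (galg_dot b (- a)) = - restr T (galg_dot b a).
  by apply/ffunP => g; rewrite galg_dotN !ffunE; case: (g \in T); rewrite ?oppr0.
apply/eqP; rewrite eqn_leq; apply/andP; split.
- rewrite -(card_imset _ (addIr (- ax))).
  apply/subset_leq_card/fintype.subsetP => _ /imsetP [a + ->].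
  by rewrite !inE => /eqP eqa; rewrite restr_dotD restr_dotN eqa eqx subrr.
- rewrite -(card_imset _ (addIr ax)).
  apply/subset_leq_card/fintype.subsetP => _ /imsetP [a + ->].
  by rewrite !inE => /eqP eqa; rewrite restr_dotD eqa eqx add0r.
Qed.


Definition info_dim k (b : vec k) : nat := \max_(T | info_set b T) #|T|.

Lemma info_dim_spec k (b : vec k) : {T | info_set b T & #|T| = info_dim b}.
Proof.
have [|T bT eT] := @eq_bigmax_cond _ (info_set b) (fun T => #|T|).
  by apply/card_gt0P; exists finset.set0; apply: info_set0.
by exists T => //; rewrite eT.
Qed.

Lemma leq_info_dim k (b : vec k) T : info_set b T -> (#|T| <= info_dim b)%N.
Proof. by move=> bT; rewrite /info_dim (bigD1 T) //= leq_maxl. Qed.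

Lemma info_dim_le k (b : vec k) : (info_dim b <= #|gT|)%N.
Proof. by apply/bigmax_leqP => T _; apply: max_card. Qed.

Lemma info_dim_gt0 k (b : vec k) : b != 0 -> (0 < info_dim b)%N.
Proof.
move=> bn0; have [i bi] : exists i, b i != 0.
  apply/existsP; apply: contraR bn0 => /existsPn b0.
  by apply/eqP/ffunP => i; rewrite ffunE; apply/eqP/negbNE.
have [g big] : exists g, b i g != 0.
  apply/existsP; apply: contraR bi => /existsPn bi0.
  by apply/eqP/ffunP => g; rewrite ffunE; apply/eqP/negbNE.
by have := leq_info_dim (info_set1 big); rewrite cards1.
Qed.

(* Restriction to a maximal information set is injective on the image of [galg_dot b]. *)
Lemma card_galg_dot_image k (b : vec k) :
  (#|galg_dot b @: [set: vec k]| <= #|F| ^ info_dim b)%N.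
Proof.
have [T bT eT] := info_dim_spec b.
rewrite -eT -card_supported -(@card_in_imset _ _ (restr T)).
  by apply/subset_leq_card/fintype.subsetP => _ /imsetP [c _ ->]; apply: restr_supported.
move=> _ _ /imsetP [a1 _ ->] /imsetP [a2 _ ->] eqT; apply/ffunP => g.
apply/eqP; apply: contraT => neq_g.
have gT' : g \notin T.
  by apply: contra neq_g => gT'; move/ffunP: eqT => /(_ g); rewrite !ffunE gT' => ->.
by have := leq_info_dim (info_setU1 bT eqT neq_g); rewrite cardsU1 gT' -eT ltnn.
Qed.

(* Each such [b] has all its coordinates in the image of [galg_dot b], a set of at most
   [#|F| ^ d] elements. *)
Lemma card_info_dim_eq k d :
  (#|[set b : vec k | info_dim b == d]| <= #|{set galg}| * (#|F| ^ d) ^ k)%N.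
Proof.
pose onto (S : {set galg}) := [set b : vec k | b \in ffun_on S].
have sub_cover : [set b : vec k | info_dim b == d] \subset
    \bigcup_(S : {set galg} | (#|S| <= #|F| ^ d)%N) onto S.
  apply/fintype.subsetP => b; rewrite inE => /eqP db.
  apply/bigcupP; exists (galg_dot b @: [set: vec k]).
    by rewrite -db card_galg_dot_image.
  rewrite inE; apply/ffun_onP => i; apply/imsetP; exists (unitv i 1); rewrite ?inE //.
  by apply/ffunP => g; rewrite galg_dot_unitv mulr1.
rewrite (leq_trans (subset_leq_card sub_cover)) // (leq_trans (leq_card_bigcup _ _)) //.
rewrite (@leq_trans (\sum_(S : {set galg} | (#|S| <= #|F| ^ d)%N) (#|F| ^ d) ^ k)) //.
  apply: leq_sum => S smallS; rewrite cardsE card_ffun_on card_ord.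
  by elim: k {sub_cover onto} => // k' IH; rewrite !expnS leq_mul.
by rewrite sum_nat_const leq_mul2r max_card orbT.
Qed.

End GroupAlgebraDot.

Arguments supported {F gT}.

Lemma prod_le_mean_powers (R : realFieldType) (I : finType) (y : I -> R) :
  (0 < #|I|)%N -> (forall i, 0 <= y i) -> \prod_i y i <= (\sum_i y i ^+ #|I|) / #|I|%:R.
Proof.
move=> I_gt0 y_ge0.
have := (@leif_AGM R I predT (fun i => y i ^+ #|I|) (fun i _ => exprn_ge0 _ (y_ge0 i))).1.
rewrite cardT -cardE prodrXl ler_pXn2r // nnegrE ?prodr_ge0 //.
by rewrite divr_ge0 ?sumr_ge0 // => i _; rewrite exprn_ge0.
Qed.

Lemma sumr_constT (V : nmodType) (I : finType) (x : V) : \sum_(i : I) x = x *+ #|I|.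
Proof. by rewrite -sumr_const; apply: eq_bigl. Qed.

Section WeightMoments.
Variables (F : finFieldType) (gT : finGroupType) (R : realType).
Local Notation galg := (galg F gT).
Local Notation vec k := {ffun 'I_k -> galg}.
Local Notation supported := (@supported F gT).

Lemma sum_prod_supported (T : {set gT}) (W : F -> R) : W 0 = 1 ->
  \sum_(x in supported T) \prod_(g in T) W (x g) = (\sum_y W y) ^+ #|T|.
Proof.
move=> W0; pose V (g : gT) (y : F) := if g \in T then W y else ((y == 0)%:R : R).
have -> : (\sum_y W y) ^+ #|T| = \prod_(g : gT) \sum_y V g y.
  rewrite -prodr_const [RHS](bigID (mem T)) /= [X in _ = _ * X]big1 ?mulr1.
    by apply: eq_bigr => g gT'; apply: eq_bigr => y _; rewrite /V gT'.
  move=> g /negbTE gT'; rewrite /V gT' (bigD1 0) //= eqxx big1 ?addr0 //.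
  by move=> y /negbTE ->.
rewrite bigA_distr_bigA /= [LHS]big_mkcond /=; apply: eq_bigr => x _.
case: ifP => xT.
  rewrite [RHS](bigID (mem T)) /= [X in _ = _ * X]big1 ?mulr1.
    by apply: eq_bigr => g gT'; rewrite /V gT'.
  move=> g /negbTE gT'; rewrite /V gT'.
  by move: xT; rewrite inE => /forallP /(_ g); rewrite gT' /= => /eqP ->; rewrite eqxx.
move: xT; rewrite inE => /negbT; rewrite negb_forall => /existsP [g].
rewrite negb_imply => /andP [gT' xg].
by rewrite (bigD1 g) //= /V (negbTE gT') (negbTE xg) mul0r.
Qed.

Lemma sum_expR_wt_supported (T : {set gT}) (beta : R) :
  \sum_(x in supported T) expR (- beta * (galg_wt x)%:R) =
  (1 + (#|F|.-1)%:R * expR (- beta)) ^+ #|T|.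
Proof.
have -> : 1 + (#|F|.-1)%:R * expR (- beta) = \sum_y expR (- beta * (y != 0 :> F)%:R).
  rewrite (bigD1 0) //= eqxx mulr0 expR0; congr (_ + _).
  rewrite (eq_bigr (fun=> expR (- beta))); last by move=> y /negbTE ->; rewrite mulr1.
  by rewrite (eq_bigl (mem (predC1 0))) // sumr_const cardC1 mulr_natl.
rewrite -sum_prod_supported ?eqxx ?mulr0 ?expR0 //; apply: eq_bigr => x xT.
rewrite -expR_sum -{1}(restr_id xT) -galg_wt_on1 /galg_wt_on natr_sum mulr_sumr.
by congr expR; apply: eq_bigr => t _; rewrite mul1g.
Qed.

Lemma sum_restr_galg_dot k (b : vec k) T (f : galg -> R) : info_set b T ->
  \sum_(a : vec k) f (restr T (galg_dot b a)) =
  #|vec k|%:R / #|F|%:R ^+ #|T| * \sum_(x in supported T) f x.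
Proof.
move=> bT; set K := #|[set a : vec k | restr T (galg_dot b a) == 0]|.
have fiber (f0 : galg -> R) :
    \sum_a f0 (restr T (galg_dot b a)) = K%:R * \sum_(x in supported T) f0 x.
  rewrite (partition_big (fun a => restr T (galg_dot b a)) (mem (supported T))) /=; last first.
    by move=> a _; apply: restr_supported.
  rewrite mulr_sumr; apply: eq_bigr => x xT.
  rewrite (eq_bigr (fun=> f0 x)); last by move=> a /eqP ->.
  rewrite (eq_bigl (fun a => a \in [set a | restr T (galg_dot b a) == x])); last first.
    by move=> a; rewrite inE.
  by rewrite sumr_const (card_fiber bT xT) mulr_natl.
have := fiber (fun=> 1); rewrite sumr_constT sumr_const card_supported natrX => ->.
have q_gt0 : (0 < #|F|)%N by apply/card_gt0P; exists 0.
by rewrite mulfK ?expf_neq0 ?pnatr_eq0 -?lt0n ?q_gt0 //; apply: fiber.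
Qed.

(* AM-GM over the [#|gT|] translates [hT] replaces the weight of [galg_dot b a] by the
   weight on a single translate, which is uniformly distributed on [F ^ T]. *)
Lemma sum_expR_galg_wt k (b : vec k) T (beta : R) :
  abelian [set: gT] -> info_set b T ->
  \sum_(a : vec k) expR (- beta * (#|T| * galg_wt (galg_dot b a))%:R) <=
  #|vec k|%:R * ((1 + (#|F|.-1)%:R * expR (- beta * #|gT|%:R)) / #|F|%:R) ^+ #|T|.
Proof.
move=> abG bT; set m := #|gT|.
have m_gt0 : (0 < m)%N by apply/card_gt0P; exists 1%g.
pose E a h := expR (- beta * (galg_wt_on T (galg_dot b a) h)%:R).
pose X := \sum_(a : vec k) expR (- beta * m%:R * (galg_wt (restr T (galg_dot b a)))%:R).
have amgm a :
    expR (- beta * (#|T| * galg_wt (galg_dot b a))%:R) <= (\sum_h E a h ^+ m) / m%:R.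
  rewrite -sum_galg_wt_on natr_sum mulr_sumr expR_sum.
  by apply: prod_le_mean_powers => // h; apply: expR_ge0.
have translate_invariant h : \sum_a E a h ^+ m = X.
  rewrite [RHS](reindex_inj (@translate_inj _ _ k h)); apply: eq_bigr => a _.
  rewrite /E -expRM_natr -galg_wt_on1 mulrAC; congr (expR (_ * _%:R)).
  by apply: eq_bigr => t _; rewrite galg_dot_translate // mul1g.
apply: le_trans (ler_sum _ (fun a _ => amgm a)) _.
rewrite -mulr_suml exchange_big /= (eq_bigr _ (fun h _ => translate_invariant h)).
rewrite sumr_constT -[X *+ _]mulr_natr mulfK ?pnatr_eq0 -?lt0n // /X mulNr.
rewrite (sum_restr_galg_dot (fun x => expR (- (beta * m%:R) * (galg_wt x)%:R)) bT).
by rewrite sum_expR_wt_supported expr_div_n mulrA mulrAC lexx.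
Qed.

End WeightMoments.

Definition col (I J : finType) (T : Type) (A : {ffun I -> {ffun J -> T}}) (j : J) :
  {ffun I -> T} := [ffun i => A i j].

Lemma sum_prod_col (R : comSemiRingType) (I J T : finType) (f : {ffun I -> T} -> R) :
  \sum_(A : {ffun I -> {ffun J -> T}}) \prod_j f (col A j) = (\sum_a f a) ^+ #|J|.
Proof.
rewrite -prodr_const bigA_distr_bigA /=.
pose tr (B : {ffun J -> {ffun I -> T}}) : {ffun I -> {ffun J -> T}} :=
  [ffun i => [ffun j => B j i]].
rewrite (reindex tr) /=; last first.
  exists (fun A => [ffun j => col A j]) => B _.
    by apply/ffunP => j; apply/ffunP => i; rewrite !ffunE.
  by apply/ffunP => i; apply/ffunP => j; rewrite !ffunE.
apply: eq_bigr => B _; apply: eq_bigr => j _; congr f.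
by apply/ffunP => i; rewrite !ffunE.
Qed.

Section LightCodewords.
Variables (F : finFieldType) (gT : finGroupType) (R : realType).
Local Notation galg := (galg F gT).
Local Notation vec k := {ffun 'I_k -> galg}.
Local Notation mat k n := {ffun 'I_k -> {ffun 'I_n -> galg}}.

Definition light k n (delta : R) (b : vec k) (A : mat k n) : bool :=
  (hweight (codeword b A))%:R <= delta * (#|gT| * n)%:R.

Definition chernoff_rate (beta delta : R) : R :=
  expR (beta * delta * #|gT|%:R) *
  ((1 + (#|F|.-1)%:R * expR (- beta * #|gT|%:R)) / #|F|%:R).

Lemma chernoff_rate_ge0 beta delta : 0 <= chernoff_rate beta delta.
Proof. by rewrite mulr_ge0 ?expR_ge0 // divr_ge0 // addr_ge0 // mulr_ge0 ?expR_ge0. Qed.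

Lemma codeword_col k n (b : vec k) (A : mat k n) j :
  codeword b A j = galg_dot b (col A j).
Proof. by rewrite ffunE; apply: eq_bigr => i _; rewrite ffunE. Qed.

Lemma codeword0 k n (A : mat k n) : codeword 0 A = 0.
Proof.
apply/ffunP => j; rewrite codeword_col !ffunE; apply: big1 => i _.
by apply/ffunP => z; rewrite !ffunE; apply: big1 => u _; rewrite !ffunE mul0r.
Qed.

(* Chernoff: the indicator of [light delta b A] is at most
   [expR (beta |T| (delta m n - hweight (codeword b A)))], a product over the columns. *)
Lemma card_light k n (b : vec k) (beta delta : R) :
  abelian [set: gT] -> 0 <= beta ->
  #|[set A : mat k n | light delta b A]|%:R <=
  #|mat k n|%:R * chernoff_rate beta delta ^+ (info_dim b * n).
Proof.
move=> abG beta_ge0; have [T bT <-] := info_dim_spec b.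
set c := beta * #|T|%:R; have c_ge0 : 0 <= c by rewrite mulr_ge0.
rewrite -sum1_card natr_sum big_mkcond /=.
apply: (@le_trans _ _ (\sum_(A : mat k n)
    expR (c * (delta * (#|gT| * n)%:R)) *
    \prod_j expR (- beta * (#|T| * galg_wt (galg_dot b (col A j)))%:R))).
  apply: ler_sum => A _; rewrite -expR_sum -expRD inE.
  have -> : \sum_j - beta * (#|T| * galg_wt (galg_dot b (col A j)))%:R =
      - (c * (hweight (codeword b A))%:R).
    rewrite hweight_sum natr_sum mulr_sumr -sumrN; apply: eq_bigr => j _.
    by rewrite codeword_col natrM mulNr mulrA.
  case: ifP => [light_A | _]; last exact: expR_ge0.
  by rewrite -mulrBr (le_trans _ (expR_ge1Dx _)) // lerDl mulr_ge0 // subr_ge0.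
rewrite -mulr_sumr.
rewrite (sum_prod_col 'I_n (fun a => expR (- beta * (#|T| * galg_wt (galg_dot b a))%:R))).
rewrite card_ord; pose M := (1 + (#|F|.-1)%:R * expR (- beta * #|gT|%:R)) / #|F|%:R : R.
have card_mat : #|mat k n|%:R = #|vec k|%:R ^+ n :> R.
  by rewrite -natrX !card_ffun !card_ord expnAC.
have -> : #|mat k n|%:R * chernoff_rate beta delta ^+ (#|T| * n) =
    expR (c * (delta * (#|gT| * n)%:R)) * (#|vec k|%:R * M ^+ #|T|) ^+ n.
  rewrite card_mat /chernoff_rate -/M exprMn -expRM_natr exprM.
  have -> : beta * delta * #|gT|%:R * (#|T| * n)%:R = c * (delta * (#|gT| * n)%:R).
    by rewrite /c !natrM; ring.
  by rewrite [in RHS]exprMn mulrCA.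
rewrite ler_wpM2l ?expR_ge0 // lerXn2r ?nnegrE ?sumr_ge0 ?mulr_ge0 ?exprn_ge0 //.
- by rewrite divr_ge0 // addr_ge0 // mulr_ge0 // expR_ge0.
- exact: (sum_expR_galg_wt beta abG bT).
Qed.

Lemma card_not_reldist_gt k n (delta : R) :
  (#|[set A : mat k n | ~~ reldist_gt A delta]| <=
   \sum_(b : vec k | b != 0%R) #|[set A : mat k n | light delta b A]|)%N.
Proof.
rewrite (leq_trans _ (leq_card_bigcup _ _)) // subset_leq_card //.
apply/fintype.subsetP => A; rewrite inE negb_forall => /existsP [b].
rewrite negb_imply => /andP [nzA not_gt]; apply/bigcupP; exists b.
  by apply: contraNneq nzA => ->; rewrite codeword0.
case: n A nzA not_gt => [|n] A nzA not_gt; first by case/eqP: nzA; apply/ffunP => -[].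
have mn_gt0 : (0 < #|gT| * n.+1)%N by rewrite muln_gt0 andbT; apply/card_gt0P; exists 1%g.
by rewrite inE /light -ler_pdivrMr ?ltr0n // leNgt.
Qed.

Lemma sum_pow_info_dim k (y : R) : 0 <= y ->
  \sum_(b : vec k | b != 0) y ^+ info_dim b <=
  #|{set galg}|%:R * \sum_(d < #|gT|) (y * #|F|%:R ^+ k) ^+ d.+1.
Proof.
move=> y_ge0.
have split_dim (b : vec k) : b != 0 ->
    y ^+ info_dim b = \sum_(d < #|gT|) (info_dim b == d.+1)%:R * y ^+ d.+1.
  move=> nz_b; have dim_gt0 := info_dim_gt0 nz_b.
  have lt_dim : ((info_dim b).-1 < #|gT|)%N by rewrite prednK ?info_dim_le.
  rewrite (bigD1 (Ordinal lt_dim)) //= prednK // eqxx mul1r big1 ?addr0 // => d nd.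
  rewrite (_ : (info_dim b == d.+1) = false) ?mul0r //; apply/negbTE.
  by apply: contraNneq nd => db; apply/eqP/val_inj; rewrite /= db.
rewrite (eq_bigr _ split_dim) exchange_big mulr_sumr; apply: ler_sum => d _.
have card_dim : #|[set b : vec k | info_dim b == d.+1]|%:R =
    \sum_(b : vec k) (info_dim b == d.+1)%:R :> R.
  rewrite -sum1_card natr_sum big_mkcond /=; apply: eq_bigr => b _.
  by rewrite inE; case: (_ == _).
rewrite -mulr_suml (@le_trans _ _ (#|[set b : vec k | info_dim b == d.+1]|%:R * y ^+ d.+1)) //.
  rewrite ler_wpM2r ?exprn_ge0 // card_dim [X in _ <= X](bigID (fun b => b != 0)) /=.
  by rewrite lerDl sumr_ge0.
rewrite exprMn [y ^+ _ * _]mulrC mulrA ler_wpM2r ?exprn_ge0 //.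
rewrite -!natrX -natrM ler_nat expnAC.
exact: card_info_dim_eq.
Qed.

End LightCodewords.

Section ChernoffExponent.
Variables (R : realType) (F : finFieldType) (gT : finGroupType) (delta : R).
Hypothesis delta_range : 0 < delta < 1 - (#|F|%:R)^-1.

Local Notation q := (#|F|%:R : R).
Local Notation m := (#|gT|%:R : R).

Let q_gt1 : 1 < q.
Proof. by rewrite ltr1n; apply/card_gt1P; exists 0, 1; rewrite eq_sym oner_neq0. Qed.

Let m_gt0 : 0 < m.
Proof. by rewrite ltr0n; apply/card_gt0P; exists 1%g. Qed.

Let delta_gt0 : 0 < delta. Proof. by case/andP: delta_range. Qed.

Let predq : (#|F|.-1)%:R = q - 1.
Proof. by rewrite -subn1 natrB // ltnW // -(ltr_nat R). Qed.

Let delta_lt1 : delta < 1.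
Proof.
case/andP: delta_range => _ /lt_le_trans; apply.
by rewrite lerBlDr lerDl invr_ge0 ltW // (lt_trans ltr01).
Qed.

Let delta_lt : delta < (q - 1) * (1 - delta).
Proof.
case/andP: delta_range => _; have q_gt0 : 0 < q by apply: lt_trans q_gt1.
rewrite -(ltr_pM2r q_gt0) mulrBl mulVf ?gt_eqF // mul1r => ?; nra.
Qed.

(* The minimiser of [chernoff_rate beta delta] over [beta]. *)
Definition chernoff_beta : R := (ln ((#|F|.-1)%:R * (1 - delta)) - ln delta) / m.

Lemma chernoff_beta_ge0 : 0 <= chernoff_beta.
Proof.
rewrite divr_ge0 ?(ltW m_gt0) // subr_ge0 predq ler_ln ?posrE ?(ltW delta_lt) //.
by rewrite mulr_gt0 ?subr_gt0.
Qed.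

Lemma chernoff_rate_beta :
  chernoff_rate F gT chernoff_beta delta = expR (- (ln q * gq #|F| delta)).
Proof.
have q_gt0 : 0 < q by apply: lt_trans q_gt1.
have q1_gt0 : 0 < q - 1 by rewrite subr_gt0.
have delta1_gt0 : 0 < 1 - delta by rewrite subr_gt0.
have beta_m : chernoff_beta * m = ln (q - 1) + ln (1 - delta) - ln delta.
  by rewrite /chernoff_beta divfK ?gt_eqF // predq lnM ?posrE.
rewrite /chernoff_rate.
have -> : 1 + (#|F|.-1)%:R * expR (- chernoff_beta * m) = expR (- ln (1 - delta)).
  rewrite mulNr beta_m opprB expRB expRD !lnK ?posrE // predq expRN lnK ?posrE //.
  by field; rewrite !gt_eqF.
rewrite -[in _ / q](lnK (x := q)) ?posrE // -expRB -expRD; congr expR.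
rewrite -mulrA [delta * _]mulrC mulrA beta_m.
rewrite /gq /hq /xlogq /logq (gt_eqF delta_gt0) (gt_eqF delta1_gt0) predq.
by field; rewrite gt_eqF // ln_gt0.
Qed.

End ChernoffExponent.

Section FailureProbability.
Variables (R : realType) (F : finFieldType) (gT : finGroupType).
Local Notation galg := (galg F gT).
Local Notation mat k n := {ffun 'I_k -> {ffun 'I_n -> galg}}.

Lemma one_sub_prob_good (r delta : R) n (k := kdim r n) :
  1 - prob_good F gT r delta n =
  #|[set A : mat k n | ~~ reldist_gt A delta]|%:R / #|mat k n|%:R.
Proof.
have mat_gt0 : (0 : R) < #|mat k n|%:R by rewrite ltr0n; apply/card_gt0P; exists 0.
have -> : [set A : mat k n | ~~ reldist_gt A delta] = ~: [set A | reldist_gt A delta].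
  by apply/setP => A; rewrite !inE.
move: mat_gt0; rewrite /prob_good -/k -(cardsC [set A : mat k n | reldist_gt A delta]) natrD.
by move=> ?; field; rewrite gt_eqF.
Qed.

Lemma one_sub_prob_good_le (r delta beta : R) n (k := kdim r n) :
  abelian [set: gT] -> 0 <= beta ->
  1 - prob_good F gT r delta n <=
  #|{set galg}|%:R *
  \sum_(d < #|gT|) (chernoff_rate F gT beta delta ^+ n * #|F|%:R ^+ k) ^+ d.+1.
Proof.
move=> abG beta_ge0; set rho := chernoff_rate F gT beta delta.
have mat_gt0 : (0 : R) < #|mat k n|%:R by rewrite ltr0n; apply/card_gt0P; exists 0.
rewrite one_sub_prob_good ler_pdivrMr // mulrC.
rewrite (le_trans (_ : _ <= (\sum_(b : {ffun 'I_k -> galg} | b != 0)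
    #|[set A : mat k n | light delta b A]|)%:R)) ?ler_nat ?card_not_reldist_gt //.
rewrite natr_sum (le_trans (ler_sum _ (fun b _ => card_light n b delta abG beta_ge0))) //.
rewrite -mulr_sumr ler_wpM2l // (eq_bigr (fun b => (rho ^+ n) ^+ info_dim b)).
  by rewrite sum_pow_info_dim ?exprn_ge0 ?chernoff_rate_ge0.
by move=> b _; rewrite mulnC exprM.
Qed.

End FailureProbability.

(* With [L = ln q] and [g = g_q delta]: the rounding slack [1/2] in [k] and the powers
   [d.+1 <= m] only cost the constant factor [q ^ (m / 2)]. *)
Lemma geometric_term_le (R : realType) (L g r : R) (k n d m : nat) :
  0 < L -> r < g -> k%:R <= r * n%:R + 2^-1 -> (d < m)%N ->
  (expR (- (L * g)) ^+ n * expR L ^+ k) ^+ d.+1 <=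
  expR (m%:R * L / 2) * expR (- (L * (g - r) * n%:R)).
Proof.
move=> L_gt0 rg k_le d_lt; rewrite -!expRM_natl -expRD -expRM_natl -expRD ler_expR.
have dm : (d.+1%:R : R) <= m%:R by rewrite ler_nat.
have d1 : (1 : R) <= d.+1%:R by rewrite ler1n.
set cn := L * (g - r) * n%:R.
have cn_ge0 : 0 <= cn by rewrite !mulr_ge0 ?(ltW L_gt0) // subr_ge0 ltW.
set X := n%:R * - (L * g) + k%:R * L.
have kL : k%:R * L <= (r * n%:R + 2^-1) * L by rewrite ler_wpM2r // ltW.
have hX : X <= L / 2 - cn by rewrite /X /cn; lra.
have h1 : d.+1%:R * X <= d.+1%:R * (L / 2 - cn).
  by rewrite ler_wpM2l // (le_trans ler01 d1).
have h2 : d.+1%:R * L <= m%:R * L by rewrite ler_wpM2r // ltW.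
have h3 : cn <= d.+1%:R * cn by rewrite ler_peMl.
lra.
Qed.

Lemma kdim_le (R : realType) (r : R) n : 0 <= r -> (kdim r n)%:R <= r * n%:R + 2^-1.
Proof. by move=> r_ge0; rewrite truncn_le addr_ge0 // mulr_ge0. Qed.

Lemma prob_good_exp_bound (R : realType) (F : finFieldType) (gT : finGroupType)
    (r delta : R) :
  abelian [set: gT] -> 0 <= r -> 0 < delta < 1 - (#|F|%:R)^-1 -> r < gq #|F| delta ->
  exists c C : R, 0 < c /\
    forall n, 1 - prob_good F gT r delta n <= C * expR (- (c * n%:R)).
Proof.
move=> abG r_ge0 delta_range rg; set L := ln (#|F|%:R : R).
have q_gt1 : (1 < #|F|)%N by apply/card_gt1P; exists 0, 1; rewrite eq_sym oner_neq0.
have L_gt0 : 0 < L by rewrite ln_gt0 // ltr1n.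
have qL : #|F|%:R = expR L by rewrite lnK // posrE ltr0n ltnW.
set P := (#|{set galg F gT}|%:R : R); set E := expR (#|gT|%:R * L / 2).
exists (L * (gq #|F| delta - r)), (P * #|gT|%:R * E); split.
  by rewrite mulr_gt0 // subr_gt0.
move=> n; have beta_ge0 := chernoff_beta_ge0 gT delta_range.
apply: le_trans (one_sub_prob_good_le F r delta n abG beta_ge0) _.
rewrite chernoff_rate_beta // -/L qL -/P -2!mulrA ler_wpM2l //.
apply: (@le_trans _ _ (\sum_(d < #|gT|) E * expR (- (L * (gq #|F| delta - r) * n%:R)))).
  by apply: ler_sum => d _; rewrite geometric_term_le ?kdim_le.
by rewrite sumr_const card_ord mulr_natl.
Qed.

Lemma prob_good_le1 (R : realType) (F : finFieldType) (gT : finGroupType)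
    (r delta : R) n :
  prob_good F gT r delta n <= 1.
Proof. by rewrite -subr_ge0 one_sub_prob_good divr_ge0. Qed.

Local Open Scope classical_set_scope.
Import numFieldNormedType.Exports.

Lemma cvg_to1_expR_bound (R : realType) (u : R^nat) (c C : R) : 0 < c ->
  (forall n, u n <= 1) -> (forall n, 1 - u n <= C * expR (- (c * n%:R))) ->
  u n @[n --> \oo] --> (1 : R).
Proof.
move=> c_gt0 u_le1 u_approx.
have exp_cvg0 : (fun n : nat => C * expR (- (c * n%:R))) @ \oo --> (0 : R).
  rewrite [X in X @ _](_ : _ = (fun n => C * expR (- c) ^+ n)).
    rewrite -[0](mulr0 C); apply: cvgMr; apply: cvg_expr.
    by rewrite ger0_norm ?expR_ge0 // expR_lt1 oppr_lt0.
  by apply: funext => n; rewrite -expRM_natr mulNr.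
have lower : (fun n : nat => 1 - C * expR (- (c * n%:R))) @ \oo --> (1 : R).
  by rewrite -[X in _ --> X]subr0; apply: cvgB; [apply: cvg_cst | apply: exp_cvg0].
apply: (squeeze_cvgr _ lower (cvg_cst (1 : R))); apply: nearW => n.
by rewrite u_le1 andbT lerBlDr -lerBlDl.
Qed.

Unset Implicit Arguments.

Theorem corollary4p2 (R : realType) (F : finFieldType) (gT : finGroupType)
  (r delta : R) :
  abelian (finset.setT : {set gT}) ->
  0 < r < 1 ->
  0 < delta < 1 - (#|F|%:R)^-1 ->
  r < gq #|F| delta ->
  (prob_good F gT r delta n @[n --> \oo] --> (1 : R)) /\
  (exists c C : R, 0 < c /\
     forall n : nat, 1 - prob_good F gT r delta n <= C * expR (- (c * n%:R))).
Proof.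
move=> abG /andP [r_gt0 _] delta_range r_lt_g.
have [c [C [c_gt0 bound]]] := prob_good_exp_bound abG (ltW r_gt0) delta_range r_lt_g.
split; last by exists c, C.
exact: cvg_to1_expR_bound c_gt0 (@prob_good_le1 _ _ _ _ _) bound.
Qed.
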